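(* Let $a>0$, $\alpha\in[0,1)$, $f\in\mathcal C_a$ and $g=\mathrm{Sh}_\alpha(f)$. Then $g\in\mathcal P$, $g$ is differentiable on $(a_g,b_g)$ with $g'(x)<\alpha$ for all $x\in(a_g,b_g)$, and $\mathrm{gr}(g)$ is stable under the shaking $\mathrm{Sh}_\alpha$, i.e. $\mathrm{Sh}_\alpha(\mathrm{gr}(g))=\mathrm{gr}(g)$.
   Context: $\mathcal C_a$ is the set of $C^1$ functions $f:\mathbb R\to\mathbb R$ that are even, satisfy $f(s)=|s|$ for $|s|\ge a$ and are strictly convex on $[-a,a]$. For $f\in\mathcal C_a$: $F_\alpha(s)=f(s)-\alpha s$, $x_\alpha^+=(f')^{-1}(\alpha)\in[0,a)$ (inverse of $f':[-a,a]\to[-1,1]$); let $F_\alpha^{-1}$ be the inverse of $F_\alpha|_{[x_\alpha^+,\infty)}$, $\phi=F_\alpha^{-1}\circ F_\alpha$, $\delta_x=(1-\alpha)^{-1}F_\alpha(x)-\phi(x)$, $s_\alpha=x_\alpha^++\delta_{x_\alpha^+}$; $x\mapsto x+\delta_x$ is an increasing bijection $(-\infty,x_\alpha^+]\to(-\infty,s_\alpha]$ with inverse $\tau$. Define $\mathrm{Sh}_\alpha(f)(x)=\alpha x+F_\alpha(\tau(x))$ for $x\le s_\alpha$ and $=x$ for $x>s_\alpha$. $\mathcal P$ is the set of continuous $g:\mathbb R\to\mathbb R$ with $g(x)\ge|x|$ for all $x$, $g(x)=|x|$ for $|x|$ large, and $g(x_0)\ne|x_0|$ for some $x_0$; for $g\in\mathcal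 P$, $a_g=\inf\{x:g(x)\ne|x|\}$, $b_g=\sup\{x:g(x)\ne|x|\}$, $\mathrm{gr}(g)=\{(x,y)\in[a_g,b_g]\times\mathbb R_{\ge0}:|x|\le y\le g(x)\}$. Shaking of sets: $D$ is the line $y=-x$, $v_\alpha$ the unit vector positively collinear to $(1,\alpha)$; for compact $K\subseteq\mathbb R^2$, $\mathrm{Sh}_\alpha(K)=\bigcup_{p\in D}K^p$ with $K^p=\emptyset$ if $K\cap(p+\mathbb Rv_\alpha)=\emptyset$ and otherwise the segment from $p$ to $p+|K\cap(p+\mathbb Rv_\alpha)|\,v_\alpha$ ($|\cdot|$ one-dimensional Lebesgue measure). *)

From HB Require Import structures.
From mathcomp Require Import all_boot all_order all_algebra.
From mathcomp Require Import all_classical all_reals all_analysis.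
Set Implicit Arguments. Unset Strict Implicit. Unset Printing Implicit Defensive.
Import Order.TTheory GRing.Theory Num.Theory.
Import numFieldNormedType.Exports.
Local Open Scope classical_set_scope.
Local Open Scope ring_scope.

Section Defs.
Variable R : realType.

Definition inCa (a : R) (f : R -> R) : Prop :=
  [/\ (forall x, derivable f x 1) /\ continuous (derive1 f),
      (forall x, f (- x) = f x),
      (forall s, a <= `|s| -> f s = `|s|) &
      (forall x y t, -a <= x -> y <= a -> x < y -> 0 < t < 1 ->
          f (t * x + (1 - t) * y) < t * f x + (1 - t) * f y)].

Definition Fal (f : R -> R) (al : R) (s : R) : R := f s - al * s.

Definition xplus (a : R) (f : R -> R) (al : R) : R :=
  xget 0 [set x | -a <= x <= a /\ derive1 f x = al].

Definition Finv (a : R) (f : R -> R) (al : R) (y : R) : R :=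
  xget 0 [set x | xplus a f al <= x /\ Fal f al x = y].

Definition phi (a : R) (f : R -> R) (al : R) (x : R) : R :=
  Finv a f al (Fal f al x).

Definition delta (a : R) (f : R -> R) (al : R) (x : R) : R :=
  (1 - al)^-1 * Fal f al x - phi a f al x.

Definition salpha (a : R) (f : R -> R) (al : R) : R :=
  xplus a f al + delta a f al (xplus a f al).

Definition tau (a : R) (f : R -> R) (al : R) (y : R) : R :=
  xget 0 [set x | x <= xplus a f al /\ x + delta a f al x = y].

Definition Shf (a : R) (f : R -> R) (al : R) (x : R) : R :=
  if x <= salpha a f al then al * x + Fal f al (tau a f al x) else x.

Definition inP (g : R -> R) : Prop :=
  [/\ continuous g,
      (forall x, `|x| <= g x),
      (exists M : R, forall x, M <= `|x| -> g x = `|x|) &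
      (exists x0, g x0 != `|x0|)].

Definition ag (g : R -> R) : R := inf [set x | g x != `|x|].
Definition bg (g : R -> R) : R := sup [set x | g x != `|x|].

Definition gr (g : R -> R) : set (R * R) :=
  [set p | ag g <= p.1 <= bg g /\ 0 <= p.2 /\ `|p.1| <= p.2 <= g p.1].

Definition valpha (al : R) : R * R :=
  ((Num.sqrt (1 + al ^+ 2))^-1, al / Num.sqrt (1 + al ^+ 2)).

Definition ptline (al : R) (p : R * R) (s : R) : R * R :=
  (p.1 + s * (valpha al).1, p.2 + s * (valpha al).2).

(* parametrisation (isometric, v unit) of K ∩ (p + R v_alpha) *)
Definition lineset (al : R) (K : set (R * R)) (p : R * R) : set R :=
  [set s | K (ptline al p s)].

Definition Kp (al : R) (K : set (R * R)) (p : R * R) : set (R * R) :=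
  [set q | lineset al K p !=set0 /\
     exists2 s, 0 <= s <= fine (lebesgue_measure (lineset al K p)) &
       q = ptline al p s].

Definition ShK (al : R) (K : set (R * R)) : set (R * R) :=
  \bigcup_(p in [set p : R * R | p.2 = - p.1]) Kp al K p.

End Defs.

From HB Require Import structures.
From mathcomp Require Import all_boot all_order all_algebra.
From mathcomp Require Import all_classical all_reals all_analysis.
From mathcomp Require Import ring lra.
Import Order.TTheory GRing.Theory Num.Theory.
Import numFieldNormedType.Exports.
Local Open Scope classical_set_scope.
Local Open Scope ring_scope.

(* Write F = F_alpha, k = 1 / (1 - alpha) and x+ = x_alpha^+.  Strict
   convexity of f makes F strictly decreasing on (-oo, x+] and strictly
   increasing on [x+, +oo), with slopes in [-(1 + alpha), 1 - alpha].  Hence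
   phi is nonincreasing and x |-> x + delta_x = x + k F(x) - phi(x) is expanding
   on (-oo, x+], so its inverse tau is nondecreasing and 1-Lipschitz.  Below
   s_alpha, g - alpha id = F o tau is then strictly decreasing, which gives
   g' < alpha, and g is Lipschitz, hence continuous; g >= |.| comes from
   f >= |.|.
   The line through (t, -t) with direction v_alpha meets gr(g) at the
   parameters s >= 0 below an explicit bound where the strictly decreasing
   continuous function g - alpha id stays above -(1 + alpha) t.  By the
   intermediate value theorem this is a segment [0, L] starting on D, which
   the shaking leaves in place. *)

Lemma ler_pdiv_cross {R : realFieldType} (A B h C : R) : 0 < h -> 0 < C ->
  A * C <= B * h -> A / h <= B / C.
Proof. by move=> h0 C0; rewrite ler_pdivrMr // mulrAC ler_pdivlMr. Qed.

Lemma ltr_pdiv_cross {R : realFieldType} (A B h C : R) : 0 < h -> 0 < C ->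
  A * C < B * h -> A / h < B / C.
Proof. by move=> h0 C0; rewrite ltr_pdivrMr // mulrAC ltr_pdivlMr. Qed.

Lemma is_derive_continuous {R : realType} (f : R -> R) (x df : R) :
  is_derive x 1 f df -> {for x, continuous f}.
Proof. by move=> [d _]; apply/differentiable_continuous/derivable1_diffP. Qed.

Lemma lipschitz_continuous {R : realType} (phi : R -> R) (L : R) : 0 < L ->
  (forall u v, `|phi u - phi v| <= L * `|u - v|) -> continuous phi.
Proof.
move=> L0 lip x; apply/cvgrPdist_lt => e e0.
apply/nbhs_ballP; exists (e / L); first exact: divr_gt0.
move=> z; rewrite /ball /= ltr_pdivlMr // => xz.
by apply: le_lt_trans (lip x z) _; rewrite mulrC.
Qed.

Lemma fine_lebesgue_measure_segment {R : realType} (L : R) : 0 <= L ->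
  fine (lebesgue_measure [set s : R | 0 <= s <= L]) = L.
Proof.
move=> L0; have -> : [set s : R | 0 <= s <= L] = [set` `[0, L]].
  by apply/seteqP; split => s /=; rewrite in_itv.
rewrite lebesgue_measure_itv /= lte_fin.
have [L_gt0|L_le0] := ltrP 0 L; first by rewrite /= oppr0 addr0.
by apply/esym/le_anti; rewrite L0 L_le0.
Qed.

Lemma decreasing_superlevel_segment {R : realType} (psi : R -> R) (m c : R) :
  0 <= m -> continuous psi -> c <= psi 0 ->
  {in `[0, m] &, {homo psi : u v /~ u < v}} ->
  exists2 L, 0 <= L & [set s | 0 <= s <= m /\ c <= psi s] = [set s | 0 <= s <= L].
Proof.
move=> m0 psi_cont c_psi0 psi_dec.
have psi_decW : {in `[0, m] &, {homo psi : u v /~ u <= v}}.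
  by move=> u v uI vI; rewrite le_eqVlt => /predU1P[->//|/(psi_dec _ _ uI vI)/ltW].
have [c_psim|psim_c] := lerP c (psi m).
  exists m => //; apply/seteqP; split => s /=; first by case.
  move=> sI; split => //; apply: le_trans c_psim _; have /andP[_ sm] := sI.
  by apply: psi_decW; rewrite ?in_itv /= ?m0 ?lexx.
have mm : Num.min (psi 0) (psi m) <= c <= Num.max (psi 0) (psi m).
  by rewrite ge_min le_max c_psi0 (ltW psim_c) orbT.
have [L LI psiL] := IVT m0 (continuous_subspaceT psi_cont) mm.
have /[!in_itv] /= /andP[L0 Lm] := LI.
exists L => //; apply/seteqP; split => s /=.
- move=> [sI c_psis]; have /andP[s0 _] := sI; rewrite s0 /= leNgt; apply/negP => Ls.
  by have := psi_dec _ _ sI LI Ls; rewrite psiL ltNge c_psis.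
- move=> /andP[s0 sL]; have sI : s \in `[0, m] by rewrite in_itv /= s0 (le_trans sL Lm).
  by split; [rewrite s0 (le_trans sL Lm) | rewrite -psiL; apply: psi_decW].
Qed.

Lemma continuous_Fal_affine {R : realType} (g : R -> R) (al t c : R) :
  continuous g -> continuous (fun s : R => Fal g al (t + s * c)).
Proof.
move=> g_cont; have aff : continuous (fun s : R => t + s * c).
  by move=> s; apply: cvgD; [exact: cvg_cst | apply: cvgM; [exact: cvg_id | exact: cvg_cst]].
move=> s; apply: cvgB; first exact: continuous_comp (aff s) (g_cont _).
by apply: cvgM; [exact: cvg_cst | exact: aff].
Qed.

Lemma valpha1_gt0 {R : realType} (al : R) : 0 < (valpha al).1.
Proof. by rewrite /= invr_gt0 sqrtr_gt0; have := sqr_ge0 al; lra. Qed.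

Lemma valpha2E {R : realType} (al : R) : (valpha al).2 = al * (valpha al).1.
Proof. by []. Qed.

Lemma ptline_diag_surj {R : realType} {al : R} (q : R * R) : 1 + al != 0 ->
  exists t s, ptline al (t, - t) s = q.
Proof.
case: q => q1 q2 al1.
pose w := (q1 + q2) / (1 + al).
exists (q1 - w), (w / (valpha al).1).
rewrite /ptline valpha2E /w /=.
have sq : Num.sqrt (1 + al ^+ 2) != 0 by rewrite gt_eqF // sqrtr_gt0; have := sqr_ge0 al; lra.
by congr pair; field; rewrite sq.
Qed.

Lemma min_nondecreasing_contracting {R : realType} {x y : R} (c : R) : x <= y ->
  Num.min x c <= Num.min y c /\ Num.min y c - Num.min x c <= y - x.
Proof.
by move=> xy; have [xc|cx] := lerP x c; have [yc|cy] := lerP y c; lra.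
Qed.

Section ClassC.

Context {R : realType} {a : R} {f : R -> R}.
Hypotheses (a_gt0 : 0 < a) (fCa : inCa a f).

(* [lra] ignores section hypotheses, so they are passed explicitly. *)
Local Ltac lra_a := have := a_gt0; lra.

Lemma derivable_f (x : R) : derivable f x 1.
Proof. by case: fCa => [[+ _] _ _ _]; apply. Qed.

Lemma is_derive_f (x : R) : is_derive x 1 f (derive1 f x).
Proof. by rewrite derive1E; apply/derivableP/derivable_f. Qed.

Lemma continuous_f : continuous f.
Proof. by move=> x; apply: is_derive_continuous (is_derive_f x). Qed.

Lemma f_MVT {u v : R} : u < v -> exists2 c, u < c < v & f v - f u = derive1 f c * (v - u).
Proof.
move=> uv; have [c cI e] := MVT uv (fun x _ => is_derive_f x) (continuous_subspaceT continuous_f).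
by exists c => //; move: cI; rewrite in_itv.
Qed.

Lemma f_id {s : R} : a <= s -> f s = s.
Proof.
move=> as_; have s0 : 0 <= s by lra_a.
by case: fCa => _ _ /(_ s) + _; rewrite ger0_norm //; apply.
Qed.

Lemma f_opp {s : R} : s <= - a -> f s = - s.
Proof.
move=> sa; have s0 : s <= 0 by lra_a.
by case: fCa => _ _ /(_ s) + _; rewrite ler0_norm //; apply; rewrite lerNr.
Qed.

Lemma f_below_chord {u v w : R} : -a <= u -> u < v -> v < w -> w <= a ->
  f v * (w - u) < f u * (w - v) + f w * (v - u).
Proof.
move=> au uv vw wa; have wu : 0 < w - u by lra.
pose t := (w - v) / (w - u).
have t01 : 0 < t < 1.
  apply/andP; split; first by rewrite divr_gt0 // subr_gt0.
  by rewrite ltr_pdivrMr // mul1r; lra.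
case: fCa => _ _ _ /(_ u w t au wa (lt_trans uv vw) t01).
have -> : t * u + (1 - t) * w = v by rewrite /t; field; lra.
have -> : 1 - t = (v - u) / (w - u) by rewrite /t; field; lra.
have -> : f u * (w - v) + f w * (v - u) = (t * f u + (v - u) / (w - u) * f w) * (w - u).
  by rewrite /t; field; lra.
by rewrite ltr_pM2r.
Qed.

Lemma derive1_f_cvg (x : R) :
  (fun h => h^-1 * (f (h + x) - f x)) @ 0^' --> derive1 f x.
Proof.
have := derivable_f x; rewrite /derivable derive1E /derive.
suff -> : (fun h => h^-1 *: ((f \o shift x) (h *: (1 : R)) - f x)) =
  (fun h => h^-1 * (f (h + x) - f x)) by [].
by apply/funext => h /=; rewrite [h *: 1]mulr1.
Qed.

Lemma derive1_f_le_slope {x m : R} : -a <= x -> x < m -> m <= a ->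
  derive1 f x <= (f m - f x) / (m - x).
Proof.
move=> ax xm ma; have H := cvg_dnbhs_at_right (derive1_f_cvg x).
rewrite -(cvg_lim (@Rhausdorff R) H); apply: limr_le; first exact: cvgP H.
near=> h.
have h0 : 0 < h by near: h; exact: nbhs_right_gt.
have hm : h < m - x by near: h; apply: nbhs_right_lt; rewrite subr_gt0.
have := @f_below_chord x (h + x) m ax ltac:(lra) ltac:(lra) ma.
by move=> chord; rewrite mulrC; apply: ler_pdiv_cross; nra.
Unshelve. all: by end_near.
Qed.

Lemma slope_le_derive1_f {m y : R} : -a <= m -> m < y -> y <= a ->
  (f y - f m) / (y - m) <= derive1 f y.
Proof.
move=> am my ya; have H := cvg_dnbhs_at_left (derive1_f_cvg y).
rewrite -(cvg_lim (@Rhausdorff R) H); apply: limr_ge; first exact: cvgP H.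
near=> h.
have h0 : h < 0 by near: h; exact: nbhs_left_lt.
have hm : m - y < h by near: h; apply: nbhs_left_gt; rewrite subr_lt0.
have := @f_below_chord m (h + y) y am ltac:(lra) ltac:(lra) ya.
have -> : h^-1 * (f (h + y) - f y) = (f y - f (h + y)) / (- h).
  by rewrite invrN mulrN -mulNr opprB mulrC.
by move=> chord; apply: ler_pdiv_cross; nra.
Unshelve. all: by end_near.
Qed.

(* Compare both derivatives with the slopes of the two halves of [[x, y]]. *)
Lemma derive1_f_lt {x y : R} : -a <= x -> x < y -> y <= a -> derive1 f x < derive1 f y.
Proof.
move=> ax xy ya; pose m := (x + y) / 2.
have xm : x < m by rewrite /m; lra.
have my : m < y by rewrite /m; lra.
have ma : m <= a by lra.
have am : -a <= m by lra.
apply: le_lt_trans (derive1_f_le_slope ax xm ma) _.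
apply: lt_le_trans (slope_le_derive1_f am my ya).
have := f_below_chord ax xm my ya.
have -> : y - m = m - x by rewrite /m; field.
have -> : y - x = (m - x) * 2 by rewrite /m; field.
move=> chord; apply: ltr_pdiv_cross; rewrite ?subr_gt0 // ltr_pM2r ?subr_gt0 //.
nra.
Qed.

Lemma derive1_f_id {s : R} : a <= s -> derive1 f s = 1.
Proof.
move=> as_; rewrite -(cvg_lim (@Rhausdorff R) (cvg_dnbhs_at_right (derive1_f_cvg s))).
apply: (lim_near_cst (@Rhausdorff R)); near=> h.
have h0 : 0 < h by near: h; exact: nbhs_right_gt.
by rewrite !f_id ?addrK ?mulVf ?gt_eqF //; lra.
Unshelve. all: by end_near.
Qed.

Lemma derive1_f_opp {s : R} : s <= -a -> derive1 f s = -1.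
Proof.
move=> sa; rewrite -(cvg_lim (@Rhausdorff R) (cvg_dnbhs_at_left (derive1_f_cvg s))).
apply: (lim_near_cst (@Rhausdorff R)); near=> h.
have h0 : h < 0 by near: h; exact: nbhs_left_lt.
rewrite !f_opp; try lra.
by rewrite opprD opprK addrNK mulrN mulVf // lt_eqF.
Unshelve. all: by end_near.
Qed.

Lemma derive1_f_le1 (c : R) : derive1 f c <= 1.
Proof.
have [ac|ca] := lerP a c; first by rewrite derive1_f_id.
have [cNa|Nac] := lerP c (-a); first by rewrite derive1_f_opp //; lra.
by rewrite -(derive1_f_id (lexx a)); apply/ltW/derive1_f_lt; lra.
Qed.

Lemma derive1_f_geN1 (c : R) : -1 <= derive1 f c.
Proof.
have [cNa|Nac] := lerP c (-a); first by rewrite derive1_f_opp.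
have [ac|ca] := lerP a c; first by rewrite derive1_f_id //; lra.
by rewrite -(derive1_f_opp (lexx (-a))); apply/ltW/derive1_f_lt; lra.
Qed.

Lemma f_ge (s : R) : s <= f s.
Proof.
have [as_|sa] := lerP a s; first by rewrite f_id.
have [c /andP[sc ca] e] := f_MVT sa.
have := derive1_f_le1 c; rewrite f_id // in e; nra.
Qed.

Lemma f_geN (s : R) : - s <= f s.
Proof.
have [sa|as_] := lerP s (-a); first by rewrite f_opp.
have [c /andP[sc ca] e] := f_MVT as_.
have := derive1_f_geN1 c; rewrite (f_opp (lexx _)) in e; nra.
Qed.

Lemma f_ge_abs (s : R) : `|s| <= f s.
Proof.
by have [s0|s0] := lerP 0 s; [rewrite ger0_norm ?f_ge | rewrite ltr0_norm ?f_geN].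
Qed.

Lemma f0_gt0 : 0 < f 0.
Proof.
have [c /andP[c0 ca] e] := f_MVT a_gt0.
have : derive1 f c < 1 by rewrite -(derive1_f_id (lexx a)); apply: derive1_f_lt; lra.
rewrite f_id // in e; nra.
Qed.

Section Alpha.
Variable al : R.
Hypotheses (al_ge0 : 0 <= al) (al_lt1 : al < 1).

Local Ltac lra_al := have := a_gt0; have := al_ge0; have := al_lt1; lra.
Local Ltac nra_al := have := a_gt0; have := al_ge0; have := al_lt1; nra.

Local Notation xp := (xplus a f al).
Local Notation F := (Fal f al).
Local Notation F' x := (derive1 f x - al).

Lemma xplus_spec : (-a <= xp <= a) /\ derive1 f xp = al.
Proof.
apply: (xgetPex 0 (P := [set x | -a <= x <= a /\ derive1 f x = al])).
have Naa : -a <= a by lra_a.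
have f'_cont : continuous (derive1 f) by case: fCa => [[_ +] _ _ _].
have mm : Num.min (derive1 f (-a)) (derive1 f a) <= al <= Num.max (derive1 f (-a)) (derive1 f a).
  by rewrite derive1_f_opp // derive1_f_id // ge_min le_max; apply/andP; split;
    apply/orP; [left|right]; lra_al.
have [c cI e] := IVT Naa (continuous_subspaceT f'_cont) mm.
by exists c; split => //; move: cI; rewrite in_itv.
Qed.

Lemma xplus_itv : -a <= xp <= a.
Proof. by case: xplus_spec. Qed.

Lemma derive1_f_lt_al {c : R} : c < xp -> derive1 f c < al.
Proof.
move=> cx; have [/andP[ax xa] e] := xplus_spec.
have [cNa|Nac] := lerP c (-a); first by rewrite derive1_f_opp //; lra_al.
by rewrite -e; apply: derive1_f_lt; lra.
Qed.

Lemma derive1_f_gt_al {c : R} : xp < c -> al < derive1 f c.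
Proof.
move=> xc; have [/andP[ax xa] e] := xplus_spec.
have [ac|ca] := lerP a c; first by rewrite derive1_f_id //; lra_al.
by rewrite -e; apply: derive1_f_lt; lra.
Qed.

Lemma is_derive_F (x : R) : is_derive x 1 F (F' x).
Proof.
have := is_deriveB (is_derive_f x) (is_deriveZ al (is_derive_id x 1)).
by rewrite [al *: 1]mulr1.
Qed.

Lemma continuous_F : continuous F.
Proof. by move=> x; apply: is_derive_continuous (is_derive_F x). Qed.

Lemma F_MVT {u v : R} : u < v -> exists2 c, u < c < v & F v - F u = F' c * (v - u).
Proof.
move=> uv; have [c cI e] := f_MVT uv; exists c => //.
by rewrite /Fal mulrBl -e; ring.
Qed.

Lemma F_decreasing {u v : R} : u < v -> v <= xp -> F v < F u.
Proof.
move=> uv vx; have [c /andP[uc cv] e] := F_MVT uv.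
have := derive1_f_lt_al (lt_le_trans cv vx); nra.
Qed.

Lemma F_increasing {u v : R} : xp <= u -> u < v -> F u < F v.
Proof.
move=> xu uv; have [c /andP[uc cv] e] := F_MVT uv.
have := derive1_f_gt_al (le_lt_trans xu uc); nra.
Qed.

Lemma F_increment_bounds {u v : R} : u <= v ->
  - ((1 + al) * (v - u)) <= F v - F u <= (1 - al) * (v - u).
Proof.
rewrite le_eqVlt => /predU1P[->|uv]; first by rewrite !subrr !mulr0 oppr0 lexx.
have [c /andP[uc cv] e] := F_MVT uv.
have := derive1_f_le1 c; have := derive1_f_geN1 c; rewrite e; nra.
Qed.

Lemma F_nondecreasing {u v : R} : xp <= u -> u <= v -> F u <= F v.
Proof. by move=> xu; rewrite le_eqVlt => /predU1P[->//|/(F_increasing xu)/ltW]. Qed.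

Lemma F_gt0 (s : R) : 0 < F s.
Proof.
rewrite /Fal; have := f_ge_abs s; have [s_lt0|s_gt0|->] := ltrgtP s 0.
- by rewrite ltr0_norm //; nra_al.
- by rewrite gtr0_norm //; nra_al.
- by rewrite mulr0 subr0 => _; exact: f0_gt0.
Qed.

Lemma F_id {s : R} : a <= s -> F s = (1 - al) * s.
Proof. by move=> as_; rewrite /Fal f_id //; ring. Qed.

Lemma F_opp {s : R} : s <= -a -> F s = - (1 + al) * s.
Proof. by move=> sa; rewrite /Fal f_opp //; ring. Qed.

Lemma F_ge_xplus (s : R) : F xp <= F s.
Proof.
by have [sx|xs|->] := ltrgtP s xp; [apply/ltW/F_decreasing | apply/ltW/F_increasing |].
Qed.

Lemma F_inj_ge {u v : R} : xp <= u -> xp <= v -> F u = F v -> u = v.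
Proof.
move=> xu xv e; have [uv|vu|//] := ltrgtP u v.
- by have := F_increasing xu uv; rewrite e ltxx.
- by have := F_increasing xv vu; rewrite e ltxx.
Qed.

Lemma Finv_spec {y : R} : F xp <= y ->
  xp <= Finv a f al y /\ F (Finv a f al y) = y.
Proof.
move=> Fxy; apply: (xgetPex 0 (P := [set x | xp <= x /\ F x = y])).
have y_gt0 : 0 < y := lt_le_trans (F_gt0 _) Fxy.
have [ax xa] := andP xplus_itv.
pose B := a + y / (1 - al).
have yal_gt0 : 0 < y / (1 - al) by apply: divr_gt0; lra_al.
have xB : xp <= B by rewrite /B; lra.
have FB : F B = (1 - al) * a + y by rewrite F_id /B; [field | ]; lra_al.
have mm : Num.min (F xp) (F B) <= y <= Num.max (F xp) (F B).
  by rewrite ge_min le_max Fxy FB /=; apply/orP; right; nra_al.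
have [c /[!in_itv] /= /andP[xc _] Fc] := IVT xB (continuous_subspaceT continuous_F) mm.
by exists c.
Qed.

Lemma FinvK {u : R} : xp <= u -> Finv a f al (F u) = u.
Proof. by move=> xu; have [? ?] := Finv_spec (F_ge_xplus u); apply: F_inj_ge. Qed.

Local Notation ph := (phi a f al).

Lemma phi_spec (x : R) : xp <= ph x /\ F (ph x) = F x.
Proof. exact: Finv_spec (F_ge_xplus x). Qed.

Lemma phi_gt_xplus {x : R} : x < xp -> xp < ph x.
Proof.
move=> xx; have [px Fpx] := phi_spec x; rewrite lt_neqAle px andbT.
by apply/eqP => e; have := F_decreasing xx (lexx _); rewrite -Fpx -e ltxx.
Qed.

Lemma phi_xplus : ph xp = xp.
Proof. exact: FinvK. Qed.

Lemma phi_opp {x : R} : x <= -a -> ph x = - (1 + al) * x / (1 - al).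
Proof.
move=> xa; have [_ xpa] := andP xplus_itv.
have au : a <= - (1 + al) * x / (1 - al) by rewrite ler_pdivlMr ?subr_gt0 //; nra_al.
have Fx : F x = F (- (1 + al) * x / (1 - al)) by rewrite F_opp // F_id //; field; lra_al.
by rewrite /phi Fx FinvK //; lra.
Qed.

Lemma phi_le {x y : R} : x <= y -> y <= xp -> ph y <= ph x.
Proof.
move=> xy yx; rewrite leNgt; apply/negP => pxy.
have [px Fpx] := phi_spec x; have [py Fpy] := phi_spec y.
have := F_increasing px pxy; rewrite Fpx Fpy; apply/negP; rewrite -leNgt.
by move: xy; rewrite le_eqVlt => /predU1P[->//|xy]; apply/ltW/F_decreasing.
Qed.

Lemma is_derive_Finv {u : R} : xp < u -> is_derive (F u) 1 (Finv a f al) (F' u)^-1.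
Proof.
move=> xu; apply: is_derive_inverse.
- by near=> z; apply/FinvK/ltW; near: z; exact: lt_nbhsr.
- by near=> z; apply: continuous_F.
- exact: is_derive_F.
- by rewrite subr_eq0 gt_eqF // derive1_f_gt_al.
Unshelve. all: by end_near.
Qed.

Lemma is_derive_phi {x : R} : x < xp -> is_derive x 1 ph ((F' (ph x))^-1 * F' x).
Proof.
move=> xx; have [_ Fpx] := phi_spec x.
have := is_derive_Finv (phi_gt_xplus xx); rewrite Fpx => Finv'.
exact: is_derive1_comp Finv' (is_derive_F x).
Qed.

Local Notation k := ((1 - al)^-1).
Local Notation sa := (salpha a f al).

Lemma k_gt0 : 0 < k.
Proof. by rewrite invr_gt0 subr_gt0. Qed.

Lemma mulk_1Bal : k * (1 - al) = 1.
Proof. by rewrite mulVf // subr_eq0 gt_eqF. Qed.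

Definition xdelta (x : R) := x + delta a f al x.

Definition xdelta' (x : R) := 1 + (k * F' x - (F' (ph x))^-1 * F' x).

Lemma is_derive_xdelta {x : R} : x < xp -> is_derive x 1 xdelta (xdelta' x).
Proof.
move=> xx.
exact: is_deriveD (is_derive_id x 1) (is_deriveB (is_deriveZ k (is_derive_F x)) (is_derive_phi xx)).
Qed.

Lemma xdelta'_ge1 {x : R} : x < xp -> 1 <= xdelta' x.
Proof.
move=> xx.
have F'x_lt0 : F' x < 0 by have := derive1_f_lt_al xx; lra.
have F'p_gt0 : 0 < F' (ph x) by have := derive1_f_gt_al (phi_gt_xplus xx); lra.
have F'p_le : F' (ph x) <= 1 - al by have := derive1_f_le1 (ph x); lra.
have k_le : k <= (F' (ph x))^-1 by rewrite lef_pV2 // posrE subr_gt0.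
have : 0 <= ((F' (ph x))^-1 - k) * (- F' x) by apply: mulr_ge0; lra.
rewrite /xdelta'; lra.
Qed.

Lemma continuous_xdelta {x : R} : x < xp -> {for x, continuous xdelta}.
Proof. by move=> xx; apply: is_derive_continuous (is_derive_xdelta xx). Qed.

Lemma xdeltaE (x : R) : xdelta x = x + k * F x - ph x.
Proof. by rewrite /xdelta /delta addrA. Qed.

Lemma xdelta_xplus : xdelta xp = sa.
Proof. by []. Qed.

Lemma salphaE : sa = k * F xp.
Proof. by rewrite -xdelta_xplus xdeltaE phi_xplus addrAC subrr add0r. Qed.

Lemma salpha_gt0 : 0 < sa.
Proof. by rewrite salphaE mulr_gt0 ?k_gt0 ?F_gt0. Qed.

Lemma F_xplus : F xp = (1 - al) * sa.
Proof. by rewrite salphaE mulrA (mulrC (1 - al)) mulk_1Bal mul1r. Qed.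

(* Since [phi] is decreasing and [F] is [(1 - al)]-Lipschitz on the right of
   [xp], [k F - phi] is nondecreasing on the left of [xp]. *)
Lemma xdelta_expanding {x y : R} : x <= y -> y <= xp -> y - x <= xdelta y - xdelta x.
Proof.
move=> xy yx; have pxy := phi_le xy yx.
have [_ Fpx] := phi_spec x; have [_ Fpy] := phi_spec y.
have /andP[_] := F_increment_bounds pxy; rewrite Fpx Fpy => Flip.
have : k * (F x - F y) <= k * ((1 - al) * (ph x - ph y)) by rewrite ler_pM2l ?k_gt0.
rewrite mulrA mulk_1Bal mul1r !xdeltaE; lra.
Qed.

Lemma xdelta_id {x : R} : x <= -a -> xdelta x = x.
Proof. by move=> xa; rewrite xdeltaE phi_opp // F_opp //; field; lra_al. Qed.

Lemma xdelta_le_salpha {x : R} : x <= xp -> xdelta x <= sa.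
Proof. by move=> xx; have := xdelta_expanding xx (lexx _); rewrite xdelta_xplus; lra. Qed.

Lemma xdelta_inj {x y : R} : x <= xp -> y <= xp -> xdelta x = xdelta y -> x = y.
Proof.
move=> xx yx e; have [xy|yx'|//] := ltrgtP x y.
- by have := xdelta_expanding (ltW xy) yx; rewrite e; lra.
- by have := xdelta_expanding (ltW yx') xx; rewrite e; lra.
Qed.

Lemma xdelta_gt_left_of_xplus {y : R} : y < sa -> exists2 z, z < xp & y < xdelta z.
Proof.
move=> ys; pose e := (sa - y) / 3.
have e3 : 3 * e = sa - y by rewrite /e; field.
have e_gt0 : 0 < e by lra.
have FxFe : F xp < F (xp + e) by apply: F_increasing; lra.
have [d d_gt0 Fd] := (nbhs_ballP xp (fun t => F t < F (xp + e))).1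
  (cvgr_lt _ (continuous_F xp) _ FxFe).
pose r := Num.min d e / 2.
have [r_gt0 rd re] : [/\ 0 < r, r < d & r < e].
  have : Num.min d e <= d by rewrite ge_min lexx.
  have : Num.min d e <= e by rewrite ge_min lexx orbT.
  have : 0 < Num.min d e by rewrite lt_min d_gt0.
  by rewrite /r; split; lra.
exists (xp - r); first lra.
have Fr : F (xp - r) < F (xp + e).
  by apply: Fd; rewrite /ball /= opprB addrC subrK gtr0_norm.
have [pr Fpr] := phi_spec (xp - r).
have pre : ph (xp - r) < xp + e.
  have xe : xp <= xp + e by lra.
  by rewrite ltNge; apply/negP => /(F_nondecreasing xe); rewrite Fpr leNgt Fr.
have : sa <= k * F (xp - r) by rewrite salphaE ler_pM2l ?k_gt0 ?F_ge_xplus.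
by rewrite xdeltaE; lra.
Qed.

Lemma xdelta_surj {y : R} : y <= sa -> exists2 x, x <= xp & xdelta x = y.
Proof.
rewrite le_eqVlt => /predU1P[->|ys]; first by exists xp.
have [z zx yz] := xdelta_gt_left_of_xplus ys.
have [ax _] := andP xplus_itv.
pose c := Num.min (-a) y.
have ca : c <= -a by rewrite ge_min lexx.
have cy : c <= y by rewrite ge_min lexx orbT.
have cz : c <= z.
  rewrite leNgt; apply/negP => zc.
  by have := xdelta_expanding (ltW zc) (le_trans ca ax); rewrite xdelta_id //; lra.
have mm : Num.min (xdelta c) (xdelta z) <= y <= Num.max (xdelta c) (xdelta z).
  by rewrite xdelta_id // ge_min le_max cy (ltW yz) orbT.
have cont : {within `[c, z], continuous xdelta}.
  apply: continuous_in_subspaceT => w; rewrite inE /= in_itv /= => /andP[_ wz].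
  exact: continuous_xdelta (le_lt_trans wz zx).
have [x /[!in_itv] /= /andP[_ xz] <-] := IVT cz cont mm.
by exists x; rewrite // ltW // (le_lt_trans xz zx).
Qed.

Local Notation ta := (tau a f al).

Lemma tau_spec {y : R} : y <= sa -> ta y <= xp /\ xdelta (ta y) = y.
Proof.
move=> ys; apply: (xgetPex 0 (P := [set x | x <= xp /\ x + delta a f al x = y])).
by have [x ? ?] := xdelta_surj ys; exists x.
Qed.

Lemma xdeltaK {x : R} : x <= xp -> ta (xdelta x) = x.
Proof.
move=> xx; have [tx xt] := tau_spec (xdelta_le_salpha xx).
exact: xdelta_inj.
Qed.

Lemma tau_salpha : ta sa = xp.
Proof. by rewrite -xdelta_xplus xdeltaK. Qed.

Lemma tau_id {x : R} : x <= -a -> ta x = x.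
Proof.
move=> xa; have [ax _] := andP xplus_itv.
by rewrite -{1}(xdelta_id xa) xdeltaK //; lra.
Qed.

Lemma tau_lt_xplus {y : R} : y < sa -> ta y < xp.
Proof.
move=> ys; have [tx xt] := tau_spec (ltW ys); rewrite lt_neqAle tx andbT.
by apply: contraTneq ys => e; rewrite -xt e xdelta_xplus ltxx.
Qed.

Lemma tau_nondecreasing_contracting {u v : R} : u <= v -> v <= sa ->
  ta u <= ta v /\ ta v - ta u <= v - u.
Proof.
move=> uv vs; have [tu xtu] := tau_spec (le_trans uv vs); have [tv xtv] := tau_spec vs.
have tuv : ta u <= ta v.
  rewrite leNgt; apply/negP => tvu.
  by have := xdelta_expanding (ltW tvu) tu; rewrite xtu xtv; lra.
by split => //; have := xdelta_expanding tuv tv; rewrite xtu xtv; lra.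
Qed.

Lemma is_derive_tau {y : R} : y < sa -> is_derive y 1 ta (xdelta' (ta y))^-1.
Proof.
move=> ys; have tx := tau_lt_xplus ys; have [_ xt] := tau_spec (ltW ys).
rewrite -{1}xt; apply: is_derive_inverse.
- by near=> z; apply/xdeltaK/ltW; near: z; exact: lt_nbhsl.
- by near=> z; apply: continuous_xdelta; near: z; exact: lt_nbhsl.
- exact: is_derive_xdelta.
- by apply: contraTneq (xdelta'_ge1 tx) => ->; rewrite ler10.
Unshelve. all: by end_near.
Qed.

Local Notation g := (Shf a f al).

Lemma Shf_le {y : R} : y <= sa -> g y = al * y + F (ta y).
Proof. by move=> ys; rewrite /Shf ys. Qed.

Lemma Shf_gt {y : R} : sa < y -> g y = y.
Proof. by move=> sy; rewrite /Shf leNgt sy. Qed.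

Lemma ShfE (y : R) :
  g y = al * y + F (ta (Num.min y sa)) + (1 - al) * (y - Num.min y sa).
Proof.
have [ys|sy] := lerP y sa; first by rewrite Shf_le // subrr mulr0 addr0.
by rewrite Shf_gt // tau_salpha F_xplus; ring.
Qed.

Lemma Shf_increment_bounds {u v : R} : u <= v ->
  - (2 * (v - u)) <= g v - g u <= v - u.
Proof.
move=> uv; rewrite !ShfE.
have [m_le m_lip] := min_nondecreasing_contracting sa uv.
have msa : Num.min v sa <= sa by rewrite ge_min lexx orbT.
have [t_le t_lip] := tau_nondecreasing_contracting m_le msa.
have /andP[F_lo F_hi] := F_increment_bounds t_le.
have p1 : 0 <= al * (v - u) by apply: mulr_ge0; lra_al.
have p2 : 0 <= (1 - al) * (ta (Num.min v sa) - ta (Num.min u sa)) by apply: mulr_ge0; lra_al.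
have p3 : 0 <= (1 - al) * (Num.min v sa - Num.min u sa - (ta (Num.min v sa) - ta (Num.min u sa))).
  by apply: mulr_ge0; lra_al.
have p4 : 0 <= (1 - al) * (v - u - (Num.min v sa - Num.min u sa)) by apply: mulr_ge0; lra_al.
by apply/andP; split; lra.
Qed.

Lemma continuous_Shf : continuous g.
Proof.
apply: (@lipschitz_continuous _ _ 2) => // u v.
wlog uv : u v / u <= v.
  by move=> H; case/orP: (le_total u v) => /H //; rewrite distrC (distrC v).
have /andP[lo hi] := Shf_increment_bounds uv.
rewrite distrC (distrC u) (ger0_norm (_ : 0 <= v - u)) ?subr_ge0 // ler_norml.
by apply/andP; split; lra.
Qed.

Lemma Shf_ge_abs (x : R) : `|x| <= g x.
Proof.
have [xs|sx] := lerP x sa; last first.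
  by rewrite Shf_gt // ger0_norm //; have := salpha_gt0; lra.
have [tx xt] := tau_spec xs; rewrite Shf_le //.
set t := ta x in tx xt *.
have [pt Fpt] := phi_spec t.
have xE : x = t + k * F t - ph t by rewrite -xt xdeltaE.
have kF : (1 - al) * (k * F t) = F t by rewrite mulrA (mulrC (1 - al)) mulk_1Bal mul1r.
have ph_le : (1 - al) * ph t <= F t by rewrite -Fpt /Fal; have := f_ge (ph t); lra.
have ph_kF : ph t <= k * F t.
  have : k * ((1 - al) * ph t) <= k * F t by rewrite ler_pM2l ?k_gt0.
  by rewrite mulrA mulk_1Bal mul1r.
have tx' : t <= x by rewrite xE; lra.
rewrite ler_norml; apply/andP; split.
- have : - (1 + al) * t <= F t by rewrite /Fal; have := f_geN t; lra.
  have : 0 <= (1 + al) * (x - t) by apply: mulr_ge0; lra_al.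
  nra.
- have : 0 <= (1 - al) * (ph t - t) by apply: mulr_ge0; lra_al.
  rewrite xE; nra.
Qed.

Lemma Shf_abs_far {x : R} : a + sa <= `|x| -> g x = `|x|.
Proof.
have := salpha_gt0; have [x0|x_lt0] := lerP 0 x.
  by rewrite ger0_norm // => sa_gt0 H; rewrite Shf_gt //; lra_a.
rewrite ltr0_norm // => sa_gt0 H.
by rewrite Shf_le ?tau_id ?F_opp; [ring | lra_a ..].
Qed.

Lemma Shf0_neq : g 0 != `|0 : R|.
Proof.
rewrite normr0 Shf_le ?mulr0 ?add0r; last exact/ltW/salpha_gt0.
by rewrite gt_eqF ?F_gt0.
Qed.

Lemma Shf_in_P : inP g.
Proof.
split.
- exact: continuous_Shf.
- exact: Shf_ge_abs.
- by exists (a + sa) => x; apply: Shf_abs_far.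
- by exists 0; exact: Shf0_neq.
Qed.

Lemma Shf_neq_le_salpha {y : R} : g y != `|y| -> y <= sa.
Proof.
apply: contraTT; rewrite -ltNge => sy.
by rewrite Shf_gt // ger0_norm ?eqxx //; have := salpha_gt0; lra.
Qed.

Lemma Shf_neq_gt {y : R} : g y != `|y| -> - (a + sa) < y.
Proof.
apply: contraTT; rewrite -leNgt => ys.
by rewrite Shf_abs_far ?eqxx // ler0_norm; have := salpha_gt0; lra_a.
Qed.

Lemma bg_le_salpha : bg g <= sa.
Proof. by apply: ge_sup; [exists 0; exact: Shf0_neq | move=> y /Shf_neq_le_salpha]. Qed.

Lemma bg_ge0 : 0 <= bg g.
Proof. by apply: ub_le_sup Shf0_neq; exists sa => y /Shf_neq_le_salpha. Qed.

Lemma Shf_lt_ag {t : R} : t < ag g -> g t = `|t|.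
Proof.
move=> tag; apply/eqP; apply: contraTT tag => gt; rewrite -leNgt.
by apply: ge_inf gt; exists (- (a + sa)) => y /Shf_neq_gt/ltW.
Qed.

Lemma is_derive_Shf {x : R} : x < sa ->
  is_derive x 1 g (al + F' (ta x) * (xdelta' (ta x))^-1).
Proof.
move=> xs.
have := is_deriveD (is_deriveZ al (is_derive_id x 1))
  (is_derive1_comp (is_derive_F (ta x)) (is_derive_tau xs)).
rewrite [al *: 1]mulr1 => Dg; apply: near_eq_is_derive Dg.
near=> y; rewrite Shf_le //; apply: ltW; near: y; exact: lt_nbhsl.
Unshelve. all: by end_near.
Qed.

Lemma Shf_derive_lt {x : R} : ag g < x < bg g -> derivable g x 1 /\ derive1 g x < al.
Proof.
move=> /andP[_ xb]; have xs := lt_le_trans xb bg_le_salpha.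
have [Dg g'x] := is_derive_Shf xs; split => //; rewrite derive1E g'x.
have tx := tau_lt_xplus xs.
have : 0 < (xdelta' (ta x))^-1 by rewrite invr_gt0; have := xdelta'_ge1 tx; lra.
have := derive1_f_lt_al tx; nra.
Qed.

Lemma Fal_Shf_decreasing {u v : R} : u < v -> v <= sa -> Fal g al v < Fal g al u.
Proof.
move=> uv vs; have us := le_trans (ltW uv) vs.
have FalE y : y <= sa -> Fal g al y = F (ta y).
  by move=> ys; rewrite /Fal Shf_le // addrAC subrr add0r.
rewrite !FalE //; have [tuv _] := tau_nondecreasing_contracting (ltW uv) vs.
have [_ xtu] := tau_spec us; have [tv xtv] := tau_spec vs.
apply: F_decreasing tv; rewrite lt_neqAle tuv andbT.
by apply: contraTneq uv => e; rewrite -xtu -xtv e ltxx.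
Qed.

Local Notation c := (valpha al).1.
Local Notation G := (gr g).

(* [-x <= y] becomes [0 <= s], [x <= y] a bound on [s], and [y <= g x] a
   superlevel condition on [Fal g al]. *)
Lemma gr_ptline_diag (t s : R) : lineset al G (t, - t) s <->
  [/\ ag g <= t + s * c, t + s * c <= bg g, 0 <= s,
      (1 - al) * (s * c) <= -2 * t & - (1 + al) * t <= Fal g al (t + s * c)].
Proof.
rewrite /lineset /ptline /gr valpha2E /Fal.
move: (valpha al).1 (valpha1_gt0 al) => r r_gt0 /=; split.
- move=> [/andP[agx xbg] [_ /andP[/ler_normlP[Nxy xy] ygx]]].
  have sc0 : 0 <= s * r by nra_al.
  by split => //; [nra | lra | lra].
- move=> [agx xbg s0 xy ygx]; have sc0 : 0 <= s * r by apply/mulr_ge0/ltW.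
  have alsc : 0 <= al * (s * r) by apply: mulr_ge0.
  by split; [rewrite agx | split; [|rewrite ler_norml]]; lra.
Qed.

Lemma gr_ptline_diag_nonempty {t : R} : lineset al G (t, - t) !=set0 -> t <= 0 /\ ag g <= t.
Proof.
move=> [s /gr_ptline_diag [agx xbg s0 xy ygx]].
have sc0 : 0 <= s * c by apply/mulr_ge0/ltW/valpha1_gt0.
have t0 : t <= 0.
  have : 0 <= (1 - al) * (s * c) by apply: mulr_ge0; lra_al.
  lra.
split => //; rewrite leNgt; apply/negP => tag.
have tx : t < t + s * c := lt_le_trans tag agx.
have := Fal_Shf_decreasing tx (le_trans xbg bg_le_salpha).
by rewrite {2}/Fal (Shf_lt_ag tag) ler0_norm //; lra.
Qed.

Lemma gr_ptline_diag_segment {t : R} : lineset al G (t, - t) !=set0 ->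
  exists2 L, 0 <= L & lineset al G (t, - t) = [set s | 0 <= s <= L].
Proof.
move=> /gr_ptline_diag_nonempty [t0 agt]; have c_gt0 := valpha1_gt0 al.
pose m := Num.min (-2 * t / ((1 - al) * c)) ((bg g - t) / c).
pose psi s := Fal g al (t + s * c).
have d_gt0 : 0 < (1 - al) * c by rewrite mulr_gt0 // subr_gt0.
have m0 : 0 <= m.
  have := bg_ge0; rewrite le_min => bg0.
  by apply/andP; split; apply: divr_ge0; first [exact: ltW | lra].
have lineE : lineset al G (t, - t) = [set s | 0 <= s <= m /\ - (1 + al) * t <= psi s].
  apply/seteqP; split => s /=.
  - move=> /gr_ptline_diag [_ xbg s0 xy ygx].
    by rewrite s0 le_min !ler_pdivlMr //; split => //; apply/andP; split; lra.
  - rewrite le_min !ler_pdivlMr // => -[/andP[s0 /andP[xy xbg]] ygx].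
    apply/gr_ptline_diag; split => //; [|lra|lra].
    by apply: le_trans agt _; rewrite lerDl mulr_ge0 // ltW.
rewrite lineE; apply: decreasing_superlevel_segment => //.
- exact: continuous_Fal_affine continuous_Shf.
- by rewrite /psi /Fal mul0r addr0; have := Shf_ge_abs t; rewrite ler0_norm //; lra.
- move=> u v; rewrite !in_itv /= => /andP[_ um] _ vu.
  apply: Fal_Shf_decreasing; first by rewrite ltrD2l ltr_pM2r.
  apply: le_trans bg_le_salpha; move: um; rewrite le_min !ler_pdivlMr // => /andP[_].
  lra.
Qed.

Lemma ShK_gr : ShK al G = G.
Proof.
apply/seteqP; split => q.
- move=> [[t y] /= -> [ne [s /andP[s0 sL] ->]]].
  have [L L0 lineE] := gr_ptline_diag_segment ne.
  rewrite lineE fine_lebesgue_measure_segment // in sL.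
  by have : lineset al G (t, - t) s by rewrite lineE /= s0 sL.
- have al1 : 1 + al != 0 by apply: lt0r_neq0; lra_al.
  move=> Gq; have [t [s ts]] := ptline_diag_surj q al1.
  have line_s : lineset al G (t, - t) s by move: Gq; rewrite -ts.
  have [L L0 lineE] := gr_ptline_diag_segment (ex_intro _ s line_s).
  exists (t, - t) => //; split; first by exists s.
  exists s; last by rewrite ts.
  by rewrite lineE fine_lebesgue_measure_segment //; move: line_s; rewrite lineE.
Qed.

End Alpha.
End ClassC.

Theorem proposition4p5 (R : realType) (a al : R) (f : R -> R) :
  0 < a -> 0 <= al < 1 -> inCa a f ->
  let g := Shf a f al in
  [/\ inP g,
      (forall x, ag g < x < bg g -> derivable g x 1 /\ derive1 g x < al) &
      ShK al (gr g) = gr g].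
Proof.
move=> a_gt0 /andP[al_ge0 al_lt1] fCa g; split.
- exact: Shf_in_P.
- by move=> x; apply: Shf_derive_lt.
- exact: ShK_gr.
Qed.
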